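(* Let $\mathbf{M}$ be the $5\times4$ matrix of operators on $\ell_{2+}$ $$\mathbf{M}=\begin{bmatrix}-\mathbf{1}&\mathbf{0}&\mathbf{0}&\mathbf{0}\\ \tfrac{1}{\sqrt2}\mathfrak{q}^*&-\mathbf{1}&\mathbf{0}&\mathbf{0}\\ \mathbf{0}&\tfrac{1}{\sqrt2}\mathfrak{q}^*&\tfrac{1}{\sqrt2}\mathfrak{q}^*&\mathbf{0}\\ \mathbf{0}&\mathbf{0}&-\mathbf{1}&\tfrac{1}{\sqrt2}\mathfrak{q}^*\\ \mathbf{0}&\mathbf{0}&\mathbf{0}&-\mathbf{1}\end{bmatrix},$$ and let $\mathbf{P}$ be any $4\times4$ permutation matrix. Then there does not exist an invertible $4\times4$ matrix of operators $\mathbf{L}$ with entries in $\mathbb{R}[\mathfrak{q}]$ such that both of the following hold: 1) $\mathbf{L}\mathbf{L}^*=(\mathbf{M}\mathbf{P})^*\mathbf{M}\mathbf{P}$; 2) $\mathbf{L}$ is lower triangular and satisfies $[(\mathbf{M}\mathbf{P})^*\mathbf{M}\mathbf{P}]_{ij}=\mathbf{0}\implies\mathbf{L}_{ij}=\mathbf{0}$ for all $i,j$.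
   Context: $\ell_{2+}$ is the Hilbert space of square-summable real sequences $(y[0],y[1],\ldots)$; matrices of operators act on $\ell_{2+}^n$ in the usual way and $^*$ denotes the adjoint. The forward shift is $\mathfrak{q}:(y[0],y[1],\ldots)\mapsto(y[1],y[2],\ldots)$, with adjoint $\mathfrak{q}^*:(y[0],y[1],\ldots)\mapsto(0,y[0],y[1],\ldots)$. $\mathbf{1}$ is the identity and $\mathbf{0}$ the zero operator; real scalars act by scaling. $\mathbb{R}[\mathfrak{q}]=\{\sum_{j=0}^{N-1}\alpha_j\mathfrak{q}^j : N\in\mathbb{N},\ \alpha_j\in\mathbb{R}\}$ (the operators whose adjoints are polynomials in $\mathfrak{q}^*$). A permutation matrix of operators has exactly one nonzero entry in each row and column, and that entry equals $\mathbf{1}$. *)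

From HB Require Import structures.
From mathcomp Require Import all_boot all_order all_algebra all_fingroup.
From mathcomp Require Import all_classical all_reals.
From mathcomp Require Import topology normedtype sequences Rstruct Rstruct_topology.
Set Implicit Arguments. Unset Strict Implicit. Unset Printing Implicit Defensive.
Import Order.TTheory GRing.Theory Num.Theory.
Local Open Scope ring_scope.

Notation R := Rdefinitions.R.

Definition rseq := nat -> R.

Definition l2 (y : rseq) : Prop := cvgn (series (fun n => y n ^+ 2)).

(* operators, acting on sequences; they are compared on l_{2+} only *)
Definition Op := rseq -> rseq.
Definition op0 : Op := fun _ _ => 0.
Definition op1 : Op := fun y => y.

(* p(q) = sum_k p_k q^k, with q the forward shift: (q^k y)[t] = y[t+k] *)
Definition polyq (p : {poly R}) : Op :=
  fun y t => \sum_(k < size p) p`_k * y (t + k)%N.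
(* p(q^* ) = sum_k p_k (q^* )^k = adjoint of p(q): ((q^* )^k y)[t] = y[t-k] if k<=t else 0 *)
Definition polyqs (p : {poly R}) : Op :=
  fun y t => \sum_(k < size p) p`_k * (if (k <= t)%N then y (t - k)%N else 0).

Definition opmx (m n : nat) := 'I_m -> 'I_n -> Op.

Definition opmx_mul m n p (A : opmx m n) (B : opmx n p) : opmx m p :=
  fun i j y t => \sum_(k < n) A i k (B k j y) t.

Definition op_eq (A B : Op) : Prop := forall y, l2 y -> A y = B y.
Definition opmx_eq m n (A B : opmx m n) : Prop := forall i j, op_eq (A i j) (B i j).

Definition vec n := 'I_n -> rseq.
Definition l2v n (x : vec n) : Prop := forall i, l2 (x i).
Definition opmx_apply m n (A : opmx m n) (x : vec n) : vec m :=
  fun i t => \sum_(j < n) A i j (x j) t.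
Definition sqnorm n (x : vec n) : R :=
  \sum_(i < n) limn (series (fun t => x i t ^+ 2)).

Definition opmx_invertible n (A : opmx n n) : Prop :=
  exists K : vec n -> vec n,
    [/\ forall x, l2v x -> l2v (K x),
        forall x, l2v x -> K (opmx_apply A x) = x,
        forall x, l2v x -> opmx_apply A (K x) = x,
        forall (a b : R) x y, l2v x -> l2v y ->
          K (fun i t => a * x i t + b * y i t) = (fun i t => a * K x i t + b * K y i t)
      & exists C : R, forall x, l2v x -> sqnorm (K x) <= C * sqnorm x].

(* The matrix M, entries given as polynomials c with M_ij = c(q^* ) *)
Definition Mpoly : 'M[{poly R}]_(5, 4) :=
  \matrix_(i < 5, j < 4)
    match nat_of_ord i, nat_of_ord j with
    | 0, 0 => -1
    | 1, 0 => (Num.sqrt 2)^-1 *: 'X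
    | 1, 1 => -1
    | 2, 1 => (Num.sqrt 2)^-1 *: 'X
    | 2, 2 => (Num.sqrt 2)^-1 *: 'X
    | 3, 2 => -1
    | 3, 3 => (Num.sqrt 2)^-1 *: 'X
    | 4, 3 => -1
    | _, _ => 0
    end.

Definition Mop : opmx 5 4 := fun i j => polyqs (Mpoly i j).
Definition Mstar : opmx 4 5 := fun i j => polyq (Mpoly j i).

Definition Pop (s : 'S_4) : opmx 4 4 := fun i j => if s i == j then op1 else op0.
Definition Pstar (s : 'S_4) : opmx 4 4 := fun i j => Pop s j i.

Definition Gram (s : 'S_4) : opmx 4 4 :=
  opmx_mul (opmx_mul (Pstar s) Mstar) (opmx_mul Mop (Pop s)).

Definition Lop (L : 'M[{poly R}]_4) : opmx 4 4 := fun i j => polyq (L i j).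
Definition Lstar (L : 'M[{poly R}]_4) : opmx 4 4 := fun i j => polyqs (L j i).

From mathcomp Require Import all_boot all_order all_algebra all_fingroup.
From mathcomp Require Import all_classical all_reals.
From mathcomp Require Import topology normedtype sequences Rstruct Rstruct_topology.
From mathcomp Require Import zify ring.
Import Order.TTheory GRing.Theory Num.Theory.
Local Open Scope ring_scope.
Set Bullet Behavior "Strict Subproofs".

(* Write L = sum_k C_k q^k with real coefficient matrices C_k, and let D_k be
   the coefficient matrices of (MP)^T, so that MP = sum_k D_k^T (q^* )^k.
   Applying L L^* = (MP)^*(MP) to the unit impulse at time 0 and reading the
   result at time d gives sum_k C_k C_(d+k)^T = sum_k D_k D_(d+k)^T.  Since
   M has degree 1, the right-hand side vanishes for d >= 2; as L is
   invertible, C_0 is invertible, and a downward induction on d then kills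
   every C_k with k >= 2.  Hence L = A + B q with A, B lower triangular and
   A A^T + B B^T = M0^T M0 + M1^T M1, A B^T = M0^T M1 up to the permutation,
   where M = M0 + M1 q^*.  Triangularity leaves only the (0,0) entry in the
   first rows of A and B; as M0^T M1 has a zero diagonal, B_00 = 0, so the
   column of M0^T M1 indexed by w = P^-1(0) must vanish.  This rules out
   w = 0 and w = 3; for w = 1 and w = 2 the sparsity pattern imposed on L
   exhibits a zero entry of M0^T M1 as a product of two nonzero numbers. *)

Definition impulse (m : nat) (a : R) : rseq := fun t => if t == m then a else 0.

Lemma l2_impulse m a : l2 (impulse m a).
Proof.
apply: (is_cvg_near_cst (a ^+ 2)); exists m.+1 => // n /= ltmn.
rewrite /series /= big_mkord (bigD1 (Ordinal ltmn)) //= /impulse eqxx.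
rewrite big1 ?addr0 // => k; rewrite -val_eqE /= => /negbTE ->.
by rewrite expr0n.
Qed.

Lemma polyq_widen (p : {poly R}) N y t : (size p <= N)%N ->
  polyq p y t = \sum_(k < N) p`_k * y (t + k)%N.
Proof.
move=> leN; rewrite /polyq (big_ord_widen N (fun k => p`_k * y (t + k)%N)) //.
rewrite big_mkcond /=; apply: eq_bigr => k _; case: ltnP => // lek.
by rewrite nth_default // mul0r.
Qed.

Lemma polyq_impulse (p : {poly R}) m a t :
  polyq p (impulse m a) t = (if (t <= m)%N then p`_(m - t) else 0) * a.
Proof.
rewrite /polyq /impulse; case: leqP => [letm | ltmt]; last first.
  by rewrite mul0r big1 // => k _; rewrite gtn_eqF ?mulr0 // ltn_addr.
have shift k : (t + k == m)%N = (k == m - t)%N by rewrite -{1}(subnKC letm) eqn_add2l.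
under eq_bigr => k _ do rewrite shift (fun_if (fun x => p`_k * x)) mulr0.
rewrite -big_mkcond (big_ord1_eq _ (fun k => p`_k * a)); case: ltnP => // le_size.
by rewrite nth_default // mul0r.
Qed.

Lemma polyq_impulse0 (p : {poly R}) a : polyq p (impulse 0 a) = impulse 0 (p`_0 * a).
Proof.
apply: funext => t; rewrite polyq_impulse /impulse leqn0 sub0n.
by case: eqP; rewrite ?mul0r.
Qed.

Lemma polyq_eq0 (p : {poly R}) : op_eq (polyq p) op0 -> p = 0.
Proof.
move=> p0; apply/polyP => m; rewrite coef0.
have := congr1 (fun y => y 0%N) (p0 _ (l2_impulse m 1)).
by rewrite polyq_impulse subn0 mulr1.
Qed.

Lemma polyqs_impulse0 (r : {poly R}) : polyqs r (impulse 0 1) = fun t => r`_t.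
Proof.
apply: funext => t; rewrite /polyqs.
have at_t k :
    (if (k <= t)%N then impulse 0 1 (t - k)%N else 0) = if (k == t)%N then 1 else 0.
  by rewrite /impulse subn_eq0 eqn_leq; case: (k <= t)%N.
under eq_bigr => k _ do rewrite at_t (fun_if (fun x => r`_k * x)) mulr1 mulr0.
rewrite -big_mkcond (big_ord1_eq _ (fun k => r`_k)); case: ltnP => // le_size.
by rewrite nth_default.
Qed.

Lemma polyq0 y : polyq 0 y = fun=> 0.
Proof. by apply: funext => t; rewrite /polyq size_poly0 big_ord0. Qed.

Lemma polyqs0 y : polyqs 0 y = fun=> 0.
Proof. by apply: funext => t; rewrite /polyqs size_poly0 big_ord0. Qed.

Lemma polyq_seq0 p : polyq p (fun=> 0) = fun=> 0.
Proof. by apply: funext => t; rewrite /polyq big1 // => k _; rewrite mulr0. Qed.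

Lemma polyqs_seq0 p : polyqs p (fun=> 0) = fun=> 0.
Proof.
by apply: funext => t; rewrite /polyqs big1 // => k _; rewrite if_same mulr0.
Qed.

Definition coefmx {m n} (A : 'M[{poly R}]_(m, n)) (k : nat) : 'M[R]_(m, n) :=
  map_mx (fun p : {poly R} => p`_k) A.

Definition mxcorr {K : pzRingType} {m n} (C : nat -> 'M[K]_(m, n)) (N d : nat)
  : 'M[K]_m := \sum_(k < N) C k *m (C (d + k)%N)^T.

(* A(q) A(q)^*; for L this is opmx_mul (Lop L) (Lstar L) up to conversion. *)
Definition polyq_gram {m n} (A : 'M[{poly R}]_(m, n)) : opmx m m :=
  fun i j y t => \sum_(k < n) polyq (A i k) (polyqs (A j k) y) t.

Lemma polyq_gram_impulse {m n} (A : 'M[{poly R}]_(m, n)) N i j d :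
    (forall i j, (size (A i j) <= N)%N) ->
  polyq_gram A i j (impulse 0 1) d = mxcorr (coefmx A) N d i j.
Proof.
move=> le_size; rewrite /polyq_gram /mxcorr summxE.
under [RHS]eq_bigr do rewrite mxE.
rewrite [RHS]exchange_big /=; apply: eq_bigr => l _.
rewrite polyqs_impulse0 (polyq_widen _ _ _ _ (le_size i l)).
by apply: eq_bigr => k _; rewrite !mxE.
Qed.

Lemma polyq_gram_eq0 {m n} (A : 'M[{poly R}]_(m, n)) i j :
  (forall k, A i k = 0 \/ A j k = 0) -> op_eq (polyq_gram A i j) op0.
Proof.
move=> disj y _; apply: funext => t; apply: big1 => k _.
by case: (disj k) => ->; rewrite ?polyq0 ?polyqs0 ?polyq_seq0.
Qed.

Lemma coefmx_eq0 {m n} {A : 'M[{poly R}]_(m, n)} {D} k :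
  (forall i j, (size (A i j) <= D)%N) -> (D <= k)%N -> coefmx A k = 0.
Proof.
move=> le_size leDk; apply/matrixP => i j; rewrite !mxE nth_default //.
exact: leq_trans (le_size i j) leDk.
Qed.

Lemma mxcorr_eq0 {K : pzRingType} {m n} {C : nat -> 'M[K]_(m, n)} {N D d} :
  (forall k, (D <= k)%N -> C k = 0) -> (D <= d)%N -> mxcorr C N d = 0.
Proof.
move=> C_eq0 leDd; apply: big1 => k _.
by rewrite [C (d + k)%N]C_eq0 ?trmx0 ?mulmx0 // (leq_trans leDd) ?leq_addr.
Qed.

Lemma mxcorr_supp2 {K : pzRingType} {m n} {C : nat -> 'M[K]_(m, n)} {N} :
  (2 <= N)%N -> (forall k, (2 <= k)%N -> C k = 0) ->
  mxcorr C N 0 = C 0%N *m (C 0%N)^T + C 1%N *m (C 1%N)^T /\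
  mxcorr C N 1 = C 0%N *m (C 1%N)^T.
Proof.
case: N => [|[|N]] // _ C_eq0; rewrite /mxcorr !big_ord_recl /=.
rewrite !big1 => [|k _|k _]; try by rewrite C_eq0 ?mul0mx.
by rewrite [C 2%N]C_eq0 // trmx0 mulmx0 !addr0.
Qed.

Lemma coef_eq0_of_mxcorr_eq0 {K : comUnitRingType} {n} {C : nat -> 'M[K]_n} N d :
    (forall k, (N <= k)%N -> C k = 0) -> C 0%N \in unitmx ->
    (forall e, (d <= e)%N -> mxcorr C N e = 0) ->
  forall e, (d <= e)%N -> C e = 0.
Proof.
move=> supp C0_unit corr_eq0; case: N supp corr_eq0 => [|N] supp corr_eq0.
  by move=> e _; exact: supp.
suff below: forall j e, (N.+1 <= e + j)%N -> (d <= e)%N -> C e = 0.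
  by move=> e; apply: (below N.+1); rewrite leq_addl.
elim=> [|j IH] e leN lede; first by apply: supp; rewrite addn0 in leN.
have C0Ce : C 0%N *m (C e)^T = 0.
  rewrite -[RHS](corr_eq0 e lede) /mxcorr big_ord_recl addn0 big1 ?addr0 // => k _.
  by rewrite (IH (e + k.+1)%N) ?trmx0 ?mulmx0 //; lia.
move/(congr1 (mulmx (invmx (C 0%N)))): C0Ce; rewrite mulKmx // mulmx0.
by move/(congr1 trmx); rewrite trmxK trmx0.
Qed.

Lemma Lop_impulse (L : 'M[{poly R}]_4) (v : 'rV[R]_4) :
  opmx_apply (Lop L) (fun j => impulse 0 (v 0 j)) =
  fun i => impulse 0 ((v *m (coefmx L 0)^T) 0 i).
Proof.
apply: funext => i; apply: funext => t; rewrite /opmx_apply /Lop.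
under eq_bigr do rewrite polyq_impulse0.
rewrite /impulse !mxE; case: eqP => _; last by rewrite big1.
by apply: eq_bigr => j _; rewrite !mxE mulrC.
Qed.

Lemma coefmx0_unit {L : 'M[{poly R}]_4} :
  opmx_invertible (Lop L) -> coefmx L 0 \in unitmx.
Proof.
case=> K [_ K_inj _ _ _]; rewrite unitmxE unitfE -det_tr.
apply/negP => /det0P [v v_neq0 v0].
pose x (u : 'rV[R]_4) : vec 4 := fun j => impulse 0 (u 0 j).
have l2x u : l2v (x u) by move=> j; exact: l2_impulse.
have xv_x0 : x v = x 0.
  by rewrite -(K_inj _ (l2x v)) -(K_inj _ (l2x 0)) !Lop_impulse v0 mul0mx.
move/eqP: v_neq0; apply; apply/rowP => j.
by have := congr1 (fun y => y j 0%N) xv_x0; rewrite /x /impulse /= !mxE.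
Qed.

Lemma Pstar_Mstar (s : 'S_4) i k :
  opmx_mul (Pstar s) Mstar i k = Mstar ((s^-1)%g i) k.
Proof.
apply: funext => y; apply: funext => t; rewrite /opmx_mul (bigD1 ((s^-1)%g i)) //=.
rewrite /Pstar /Pop permKV eqxx big1 ?addr0 // => l ne_l.
by rewrite (canF_eq (permK s)) (negbTE ne_l).
Qed.

Lemma Mop_Pop (s : 'S_4) k j :
  opmx_mul Mop (Pop s) k j = Mop k ((s^-1)%g j).
Proof.
apply: funext => y; apply: funext => t; rewrite /opmx_mul (bigD1 ((s^-1)%g j)) //=.
rewrite /Pop permKV eqxx big1 ?addr0 // => l ne_l.
by rewrite (canF_eq (permK s)) (negbTE ne_l) /Mop polyqs_seq0.
Qed.

Lemma GramE (s : 'S_4) i j :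
  Gram s i j = polyq_gram (col_perm (s^-1)%g Mpoly)^T i j.
Proof.
apply: funext => y; apply: funext => t; rewrite /Gram {1}/opmx_mul /polyq_gram.
by apply: eq_bigr => k _; rewrite Pstar_Mstar Mop_Pop /Mstar /Mop !mxE.
Qed.

Lemma coefmx_perm_gram {m n} (A : 'M[{poly R}]_(m, n)) (s : 'S_n) d e a b :
  (coefmx (col_perm (s^-1)%g A)^T d *m (coefmx (col_perm (s^-1)%g A)^T e)^T)
    (s a) (s b) =
  ((coefmx A d)^T *m coefmx A e) a b.
Proof. by rewrite !mxE; apply: eq_bigr => k _; rewrite !mxE !permK. Qed.

Lemma mulmx_trmx_trig_col0 {K : pzRingType} {m n p} {X : 'M[K]_(p.+1, n.+1)}
    (Y : 'M[K]_(m, n.+1)) i :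
  is_trig_mx X -> (Y *m X^T) i 0 = Y i 0 * X 0 0.
Proof.
move/is_trig_mxP=> X_trig; rewrite mxE big_ord_recl mxE big1 ?addr0 // => j _.
by rewrite mxE X_trig ?mulr0.
Qed.

Lemma trig_unitmx_diag_neq0 {F : fieldType} {n} {A : 'M[F]_n} i :
  is_trig_mx A -> A \in unitmx -> A i i != 0.
Proof.
by move=> A_trig; rewrite unitmxE unitfE det_trig // => /prodf_neq0; apply.
Qed.

Section TriangularFactor.

Context {F : fieldType} {n : nat} {s : 'S_n.+1} {A B G0 G1 : 'M[F]_n.+1}.
Context {w : 'I_n.+1}.
Hypotheses (A_trig : is_trig_mx A) (B_trig : is_trig_mx B).
Hypothesis A_unit : A \in unitmx.
Hypothesis sw : s w = 0.
Hypothesis AAt_BBt : forall a b, (A *m A^T + B *m B^T) (s a) (s b) = G0 a b.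
Hypothesis ABt : forall a b, (A *m B^T) (s a) (s b) = G1 a b.
Hypothesis G1ww : G1 w w = 0.

Lemma trig_factor_B00_eq0 : B 0 0 = 0.
Proof.
have := ABt w w; rewrite sw G1ww mulmx_trmx_trig_col0 // => /eqP.
by rewrite mulf_eq0 (negbTE (trig_unitmx_diag_neq0 0 A_trig A_unit)) => /eqP.
Qed.

Lemma trig_factor_col_eq0 a : G1 a w = 0.
Proof. by rewrite -ABt sw mulmx_trmx_trig_col0 // trig_factor_B00_eq0 mulr0. Qed.

Lemma trig_factor_entry_neq0 a b : G0 a w != 0 -> G1 w b != 0 ->
  (forall c, c != w -> A (s a) (s c) = 0 \/ B (s b) (s c) = 0) -> G1 a b != 0.
Proof.
move=> G0aw G1wb off_w.
have Asa0 : A (s a) 0 != 0.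
  apply: contraNneq G0aw => Asa0; rewrite -AAt_BBt sw mxE.
  by rewrite !mulmx_trmx_trig_col0 // Asa0 trig_factor_B00_eq0 !mulr0 mul0r addr0.
have Bsb0 : B (s b) 0 != 0.
  apply: contraNneq G1wb => Bsb0; apply/eqP.
  rewrite -ABt sw -[A in LHS]trmxK -trmx_mul mxE.
  by rewrite mulmx_trmx_trig_col0 // Bsb0 mul0r.
rewrite -ABt mxE (reindex_inj (@perm_inj _ s)) /= (bigD1 w) //= sw big1 ?addr0.
  by rewrite mxE mulf_neq0.
by move=> c /off_w[] E; rewrite mxE E ?mulr0 ?mul0r.
Qed.

End TriangularFactor.

Definition invsqrt2 : R := (Num.sqrt 2)^-1.

Lemma invsqrt2_neq0 : invsqrt2 != 0.
Proof. by rewrite invr_eq0 sqrtr_eq0 -ltNge ltr0n. Qed.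

Lemma size_Mpoly k a : (size (Mpoly k a) <= 2)%N.
Proof.
rewrite mxE; case: k a => [[|[|[|[|[|//]]]]] ?] [[|[|[|[|//]]]] ?] /=;
  by rewrite ?size_polyN ?size_poly1 ?size_poly0
             ?(leq_trans (size_scale_leq _ _)) ?size_polyX.
Qed.

Lemma Mpoly_supp k a : Mpoly k a != 0 -> (a <= k <= a.+1)%N.
Proof.
rewrite mxE; case: k a => [[|[|[|[|[|//]]]]] ?] [[|[|[|[|//]]]] ?] //=.
all: by rewrite eqxx.
Qed.

Lemma Mpoly_cols_disjoint (a b : 'I_4) :
  (a.+1 < b)%N -> forall k, Mpoly k a = 0 \/ Mpoly k b = 0.
Proof.
move=> lt_ab k.
have [|/Mpoly_supp/andP[_ le_ka]] := eqVneq (Mpoly k a) 0; first by left.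
have [|/Mpoly_supp/andP[le_bk _]] := eqVneq (Mpoly k b) 0; first by right.
lia.
Qed.

(* With M = M0 + M1 q^* and q q^* = 1, M^* M = Mgram0 + Mgram1 q^* + Mgram1^T q. *)
Definition Mgram0 : 'M[R]_4 :=
  (coefmx Mpoly 0)^T *m coefmx Mpoly 0 + (coefmx Mpoly 1)^T *m coefmx Mpoly 1.
Definition Mgram1 : 'M[R]_4 := (coefmx Mpoly 0)^T *m coefmx Mpoly 1.

Lemma Mgram0E (a b : 'I_4) :
  Mgram0 a b = (1 + invsqrt2 ^+ 2) *+ (a == b) +
               invsqrt2 ^+ 2 *+ (((a : nat), (b : nat)) \in [:: (1, 2); (2, 1)]%N).
Proof.
rewrite !mxE !big_ord_recl !big_ord0 !mxE.
case: a b => [[|[|[|[|//]]]] ?] [[|[|[|[|//]]]] ?] /=;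
  by rewrite -/invsqrt2 ?coefN ?coefZ ?coefX ?coef1 ?coef0 /=; ring.
Qed.

Lemma Mgram1E (a b : 'I_4) :
  Mgram1 a b = - invsqrt2 *+ (((a : nat), (b : nat)) \in [:: (1, 0); (2, 3)]%N).
Proof.
rewrite !mxE !big_ord_recl !big_ord0 !mxE.
case: a b => [[|[|[|[|//]]]] ?] [[|[|[|[|//]]]] ?] /=;
  by rewrite -/invsqrt2 ?coefN ?coefZ ?coefX ?coef1 ?coef0 /=; ring.
Qed.

Lemma Mgram_no_trig_factor (s : 'S_4) (A B : 'M[R]_4) :
    is_trig_mx A -> is_trig_mx B -> A \in unitmx ->
    (forall a b, (forall k, Mpoly k a = 0 \/ Mpoly k b = 0) ->
       A (s a) (s b) = 0 /\ B (s a) (s b) = 0) ->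
    (forall a b, (A *m A^T + B *m B^T) (s a) (s b) = Mgram0 a b) ->
    (forall a b, (A *m B^T) (s a) (s b) = Mgram1 a b) ->
  False.
Proof.
move=> A_trig B_trig A_unit sparse G0E G1E.
have sep (a b : 'I_4) :
    (a.+1 < b)%N || (b.+1 < a)%N -> A (s a) (s b) = 0 /\ B (s a) (s b) = 0.
  by case/orP=> lt; apply: sparse => k; [|apply/or_comm]; exact: Mpoly_cols_disjoint.
have c_neq0 : - invsqrt2 != 0 by rewrite oppr_eq0 invsqrt2_neq0.
have c2_neq0 : invsqrt2 ^+ 2 != 0 by rewrite expf_neq0 // invsqrt2_neq0.
have [w sw] : exists w, s w = 0 by exists ((s^-1)%g 0); rewrite permKV.
have G1ww : Mgram1 w w = 0 by rewrite Mgram1E; case: w {sw} => [[|[|[|[|]]]] ?].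
have col_w := trig_factor_col_eq0 A_trig B_trig A_unit sw G1E G1ww.
have G1ab_neq0 := trig_factor_entry_neq0 A_trig B_trig A_unit sw G0E G1E G1ww.
case: w sw {G1ww} col_w G1ab_neq0 => [[|[|[|[|//]]]] w_lt] sw col_w G1ab_neq0.
- by move/eqP: c_neq0; apply; rewrite -(col_w 1) Mgram1E /= mulr1n.
- apply: (negP (G1ab_neq0 2 0 _ _ _)).
  + by rewrite Mgram0E /= mulr0n add0r mulr1n.
  + by rewrite Mgram1E /= mulr1n.
  + move=> [[|[|[|[|//]]]] c_lt] //= _; first
      [ left; apply: (proj1 (sep _ _ _)); exact: isT
      | right; apply: (proj2 (sep _ _ _)); exact: isT ].
  + by rewrite Mgram1E.
- apply: (negP (G1ab_neq0 1 3 _ _ _)).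
  + by rewrite Mgram0E /= mulr0n add0r mulr1n.
  + by rewrite Mgram1E /= mulr1n.
  + move=> [[|[|[|[|//]]]] c_lt] //= _; first
      [ left; apply: (proj1 (sep _ _ _)); exact: isT
      | right; apply: (proj2 (sep _ _ _)); exact: isT ].
  + by rewrite Mgram1E.
- by move/eqP: c_neq0; apply; rewrite -(col_w 2) Mgram1E /= mulr1n.
Qed.

Theorem theorem3 (s : 'S_4) :
  ~ exists L : 'M[{poly R}]_4,
      [/\ opmx_invertible (Lop L),
          opmx_eq (opmx_mul (Lop L) (Lstar L)) (Gram s),
          (forall i j : 'I_4, (i < j)%N -> op_eq (Lop L i j) op0)
        & (forall i j : 'I_4, op_eq (Gram s i j) op0 -> op_eq (Lop L i j) op0)].
Proof.
case=> L [L_inv LLt_Gram L_trig L_sparse].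
pose MP := (col_perm (s^-1)%g Mpoly)^T.
pose N := maxn 2 (\max_(ij : 'I_4 * 'I_4) size (L ij.1 ij.2)).
have size_L i j : (size (L i j) <= N)%N.
  apply: leq_trans (leq_maxr _ _).
  exact: (leq_bigmax (F := fun ij => size (L ij.1 ij.2)) (i, j)).
have size_MP i j : (size (MP i j) <= 2)%N.
  by rewrite /MP 2!mxE size_Mpoly.
have corrE d : mxcorr (coefmx L) N d = mxcorr (coefmx MP) N d.
  apply/matrixP => i j; rewrite -!polyq_gram_impulse // => [|i' j'].
    by rewrite -GramE -(LLt_Gram i j _ (l2_impulse 0 1)).
  exact: leq_trans (size_MP i' j') (leq_maxl _ _).
have MP_hi k : (2 <= k)%N -> coefmx MP k = 0 := coefmx_eq0 k size_MP.
have L_hi : forall k, (2 <= k)%N -> coefmx L k = 0.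
  apply: (coef_eq0_of_mxcorr_eq0 N 2 (coefmx_eq0^~ size_L) (coefmx0_unit L_inv)).
  by move=> d le2d; rewrite corrE (mxcorr_eq0 MP_hi).
have le2N : (2 <= N)%N := leq_maxl _ _.
have [corrL0 corrL1] := mxcorr_supp2 le2N L_hi.
have [corrM0 corrM1] := mxcorr_supp2 le2N MP_hi.
have L_coef_eq0 i j k : op_eq (Lop L i j) op0 -> coefmx L k i j = 0.
  by move/polyq_eq0; rewrite mxE => ->; rewrite coef0.
apply: (@Mgram_no_trig_factor s (coefmx L 0) (coefmx L 1)).
- by apply/is_trig_mxP => i j /L_trig /L_coef_eq0.
- by apply/is_trig_mxP => i j /L_trig /L_coef_eq0.
- exact: coefmx0_unit.
- move=> a b disj; split; apply/L_coef_eq0/L_sparse; rewrite GramE.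
  all: apply: (polyq_gram_eq0 _ (s a) (s b)) => k.
  all: by move: (disj k); rewrite !mxE !permK.
- by move=> a b; rewrite -corrL0 corrE corrM0 [LHS]mxE !coefmx_perm_gram [RHS]mxE.
- by move=> a b; rewrite -corrL1 corrE corrM1 coefmx_perm_gram.
Qed.
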